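(* Let $X := (0,\infty)$ and let $g : X \to X$ be continuous and strictly increasing with $g(x) < x$ for all $x>0$. Then the following statements are equivalent. (i) The functions $g$ and $\mathrm{id}-g$ (i.e. $x \mapsto x - g(x)$) admit a common Abel function. (ii) The functions $g$ and $\mathrm{id}-g$ commute, i.e. $g(x - g(x)) = g(x) - g(g(x))$ for all $x>0$. (iii) For all $x>0$, $g(x) = g(x - g(x)) + g(g(x))$.
   Context: An Abel function of a map $\phi : X \to X$ is a homeomorphism $\alpha : X \to \mathbb{R}$ for which there is a constant $c$ with $\alpha(\phi(x)) = \alpha(x) + c$ for all $x > 0$. A common Abel function of $g$ and $\mathrm{id}-g$ is a single such $\alpha$ that is an Abel function of both (with possibly different constants). *)

(* concrete reals R. X := (0, +oo) is represented by
   functions R -> R considered only on positive arguments. *)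
From Stdlib Require Import Reals.
Open Scope R_scope.

Definition homeo_X_R (alpha : R -> R) : Prop :=
  (forall x, 0 < x -> continuity_pt alpha x) /\
  exists beta : R -> R,
    (forall y, 0 < beta y) /\
    (forall y, alpha (beta y) = y) /\
    (forall x, 0 < x -> beta (alpha x) = x) /\
    (forall y, continuity_pt beta y).

Definition Abel_function (phi alpha : R -> R) : Prop :=
  homeo_X_R alpha /\
  exists c : R, forall x, 0 < x -> alpha (phi x) = alpha x + c.

Definition common_Abel_function (phi psi alpha : R -> R) : Prop :=
  Abel_function phi alpha /\ Abel_function psi alpha.

From Stdlib Require Import Reals Lra Lia Classical.
Open Scope R_scope.

(* Put h := id - g.  Under (ii), g and h are commuting increasing maps with g + h = id (were h not
   increasing, some g^n y - g^n x would never shrink although g^n y tends to 0), and we show that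
   then g x = a x, so that ln is a common Abel function.  The ratio r x := g x / x satisfies
   r x = r x * r (g x) + (1 - r x) * r (h x): it is a martingale on the binary tree of g/h-splittings
   of x.  Summing the squared increments over the tree (an energy that stays below x) gives
   r (g x) >= r x, so r increases to a limit L along each g-orbit, and L does not change when x is
   replaced by h x.  Hence g^j y <= h^m y forces L^j <= (1 - L)^m; together with the symmetric
   statement for h this yields L + L' <= 1, which squeezes r (g y) = r y.  Then g^k x = (r x)^k x,
   and comparing the g- and h-orbits of two points shows that r is constant. *)

Definition ratio (f : R -> R) (x : R) : R := f x / x.

Lemma Un_cv_const (c : R) : Un_cv (fun _ => c) c.
Proof.
  intros eps Heps; exists O; intros n _.
  unfold Rdist; rewrite Rminus_diag, Rabs_R0; lra.
Qed.

Section Iterates.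
Variable f : R -> R.
Hypothesis f_pos : forall x, 0 < x -> 0 < f x.

Lemma iter_pos n x : 0 < x -> 0 < Nat.iter n f x.
Proof. intros Hx; induction n; simpl; auto. Qed.

Lemma iter_incr n x y :
  (forall x y, 0 < x -> x < y -> f x < f y) -> 0 < x -> x < y ->
  Nat.iter n f x < Nat.iter n f y.
Proof.
  intros f_incr Hx Hxy; induction n; simpl; auto.
  apply f_incr; auto; apply iter_pos; auto.
Qed.

Lemma iter_le n x y :
  (forall x y, 0 < x -> x < y -> f x < f y) -> 0 < x -> x <= y ->
  Nat.iter n f x <= Nat.iter n f y.
Proof.
  intros f_incr Hx [Hxy | <-]; [left; apply iter_incr | right]; auto.
Qed.

Lemma iter_le_self n x : (forall x, 0 < x -> f x < x) -> 0 < x -> Nat.iter n f x <= x.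
Proof.
  intros f_lt Hx; induction n; simpl; [lra|].
  pose proof (f_lt _ (iter_pos n x Hx)); lra.
Qed.

Lemma iter_tends_to_0 y c :
  (forall x, 0 < x -> f x < x) -> (forall x, 0 < x -> continuity_pt f x) ->
  0 < y -> 0 < c -> exists n, Nat.iter n f y <= c.
Proof.
  intros f_lt f_cont Hy Hc.
  set (u n := Nat.iter n f y).
  assert (Hu : forall n, 0 < u n) by (intros n; apply iter_pos; auto).
  destruct (decreasing_cv u) as [l Hl].
  - intros n; left; apply f_lt, Hu.
  - exists 0; intros z [n ->]; unfold opp_seq; pose proof (Hu n); lra.
  - destruct (Rle_lt_dec l 0) as [Hl0 | Hl0].
    + destruct (Hl c Hc) as [N HN]; exists N.
      specialize (HN N (Nat.le_refl N)); unfold Rdist in HN.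
      pose proof (Rle_abs (u N - l)); unfold u in *; lra.
    + (* a positive limit would be a fixed point of f *)
      assert (Hfl : Un_cv (fun n => f (u n)) (f l)) by (apply continuity_seq; auto).
      assert (Hshift : Un_cv (fun n => f (u n)) l).
      { apply Un_cv_ext with (fun n => u (n + 1)%nat).
        - intros n; unfold u; rewrite Nat.add_1_r; reflexivity.
        - apply CV_shift'; exact Hl. }
      pose proof (UL_sequence _ _ _ Hfl Hshift); pose proof (f_lt l Hl0); lra.
Qed.

Lemma iter_ratio_cv (u : nat -> R) l m :
  (forall k, 0 < u k) ->
  (forall i, (i < m)%nat -> Un_cv (fun k => ratio f (Nat.iter i f (u k))) l) ->
  Un_cv (fun k => Nat.iter m f (u k) / u k) (l ^ m).
Proof.
  intros Hu Hcv; induction m as [|m IH]; simpl.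
  - apply Un_cv_ext with (fun _ => 1); [intros k; pose proof (Hu k); field; lra|].
    apply Un_cv_const.
  - apply Un_cv_ext
      with (fun k => ratio f (Nat.iter m f (u k)) * (Nat.iter m f (u k) / u k)).
    + intros k; unfold ratio; pose proof (Hu k); pose proof (iter_pos m (u k) (Hu k)).
      field; lra.
    + apply CV_mult; auto.
Qed.

End Iterates.

Record splitting (g h : R -> R) : Prop := {
  splitting_g_pos : forall x, 0 < x -> 0 < g x;
  splitting_h_pos : forall x, 0 < x -> 0 < h x;
  splitting_sum : forall x, 0 < x -> g x + h x = x;
  splitting_comm : forall x, 0 < x -> g (h x) = h (g x);
  splitting_g_incr : forall x y, 0 < x -> x < y -> g x < g y;
  splitting_h_incr : forall x y, 0 < x -> x < y -> h x < h y;
  splitting_g_cont : forall x, 0 < x -> continuity_pt g x;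
  splitting_h_cont : forall x, 0 < x -> continuity_pt h x }.

Lemma splitting_sym g h : splitting g h -> splitting h g.
Proof.
  intros [gp hp sum comm gi hi gc hc]; constructor; auto.
  - intros x Hx; pose proof (sum x Hx); lra.
  - intros x Hx; symmetry; auto.
Qed.

Section Splitting.
Variables g h : R -> R.
Hypothesis Hgh : splitting g h.

Let g_pos := splitting_g_pos g h Hgh.
Let h_pos := splitting_h_pos g h Hgh.
Let gh_sum := splitting_sum g h Hgh.
Let gh_comm := splitting_comm g h Hgh.
Let g_incr := splitting_g_incr g h Hgh.
Let g_cont := splitting_g_cont g h Hgh.

Lemma g_lt_id x : 0 < x -> g x < x.
Proof. intros Hx; pose proof (gh_sum x Hx); pose proof (h_pos x Hx); lra. Qed.

Lemma g_additive x : 0 < x -> g x = g (g x) + g (h x).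
Proof.
  intros Hx; rewrite gh_comm by auto.
  symmetry; apply gh_sum, g_pos, Hx.
Qed.

Lemma ratio_g_pos x : 0 < x -> 0 < ratio g x.
Proof. intros Hx; apply Rdiv_lt_0_compat; auto. Qed.

Lemma ratio_g_lt_1 x : 0 < x -> ratio g x < 1.
Proof.
  intros Hx; unfold ratio; pose proof (g_lt_id x Hx).
  apply Rmult_lt_reg_r with x; auto; field_simplify; lra.
Qed.

Lemma ratio_h_eq x : 0 < x -> ratio h x = 1 - ratio g x.
Proof.
  intros Hx; unfold ratio.
  replace (h x) with (x - g x) by (pose proof (gh_sum x Hx); lra); field; lra.
Qed.

Lemma ratio_g_split x : 0 < x ->
  ratio g x = ratio g x * ratio g (g x) + (1 - ratio g x) * ratio g (h x).
Proof.
  intros Hx; rewrite <- ratio_h_eq by auto; unfold ratio.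
  pose proof (g_pos x Hx); pose proof (h_pos x Hx).
  rewrite (g_additive x Hx) at 1; field; lra.
Qed.

Lemma iter_g_h_comm k x : 0 < x -> Nat.iter k g (h x) = h (Nat.iter k g x).
Proof.
  intros Hx; induction k; simpl; auto.
  rewrite IHk; apply gh_comm, iter_pos; auto.
Qed.

Lemma iter_g_iter_h_comm k m x : 0 < x ->
  Nat.iter k g (Nat.iter m h x) = Nat.iter m h (Nat.iter k g x).
Proof.
  intros Hx; induction m; simpl; auto.
  rewrite iter_g_h_comm, IHm by (apply iter_pos; auto); reflexivity.
Qed.

Fixpoint split_sum (F : R -> R) (n : nat) (x : R) : R :=
  match n with
  | O => F x
  | S n => split_sum F n (g x) + split_sum F n (h x)
  end.

Lemma split_sum_le F G n x : 0 < x -> (forall z, 0 < z -> F z <= G z) ->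
  split_sum F n x <= split_sum G n x.
Proof.
  revert x; induction n; intros x Hx HFG; simpl; auto.
  apply Rplus_le_compat; auto.
Qed.

Lemma split_sum_ext F G n x : 0 < x -> (forall z, 0 < z -> F z = G z) ->
  split_sum F n x = split_sum G n x.
Proof.
  intros Hx HFG; apply Rle_antisym; apply split_sum_le; auto;
    intros z Hz; rewrite HFG; auto; lra.
Qed.

Lemma split_sum_lin a b F G n x :
  split_sum (fun z => a * F z + b * G z) n x = a * split_sum F n x + b * split_sum G n x.
Proof. revert x; induction n; intros x; simpl; auto; rewrite !IHn; ring. Qed.

Lemma split_sum_additive T n x : 0 < x ->
  (forall z, 0 < z -> T z = T (g z) + T (h z)) -> split_sum T n x = T x.
Proof.
  revert x; induction n; intros x Hx HT; simpl; auto.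
  rewrite !IHn; auto; symmetry; auto.
Qed.

Lemma split_sum_S F n x :
  split_sum F (S n) x = split_sum (fun z => F (g z) + F (h z)) n x.
Proof.
  revert x; induction n; intros x; [reflexivity|].
  change (split_sum F (S (S n)) x)
    with (split_sum F (S n) (g x) + split_sum F (S n) (h x)).
  rewrite !IHn; reflexivity.
Qed.

Lemma split_sum_nonneg F n x : 0 < x -> (forall z, 0 < z -> 0 <= F z) ->
  0 <= split_sum F n x.
Proof.
  revert x; induction n; intros x Hx HF; simpl; auto.
  pose proof (IHn (g x) (g_pos x Hx) HF); pose proof (IHn (h x) (h_pos x Hx) HF); lra.
Qed.

Lemma split_sum_id n x : 0 < x -> split_sum (fun z => z) n x = x.
Proof. intros Hx; apply (split_sum_additive (fun z => z)); auto; intros z Hz; symmetry; auto. Qed.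

Definition energy (z : R) : R := g z ^ 2 / z.

(* [defect z = z * r * (1 - r) * (ratio g (g z) - ratio g (h z))^2] with [r = ratio g z]. *)
Definition defect (z : R) : R :=
  (g (g z) * h z - g (h z) * g z) ^ 2 / (z * g z * h z).

Lemma energy_le z : 0 < z -> energy z <= z.
Proof.
  intros Hz; unfold energy; pose proof (g_pos z Hz); pose proof (g_lt_id z Hz).
  apply Rmult_le_reg_r with z; auto; field_simplify; nra.
Qed.

Lemma defect_nonneg z : 0 < z -> 0 <= defect z.
Proof.
  intros Hz; unfold defect; pose proof (g_pos z Hz); pose proof (h_pos z Hz).
  apply Rmult_le_pos; [apply pow2_ge_0|].
  left; apply Rinv_0_lt_compat, Rmult_lt_0_compat; [apply Rmult_lt_0_compat|]; auto.
Qed.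

Lemma energy_split z : 0 < z -> energy (g z) + energy (h z) = energy z + defect z.
Proof.
  intros Hz; unfold energy, defect.
  pose proof (g_pos z Hz); pose proof (h_pos z Hz).
  pose proof (gh_sum z Hz) as Hsum; pose proof (g_additive z Hz) as Hadd.
  set (G := g z) in *; set (K := h z) in *; set (u := g G) in *; set (v := g K) in *.
  replace z with (G + K) by lra; rewrite Hadd.
  field; repeat split; lra.
Qed.

Lemma g_g_lower_bound z eps : 0 < z -> 0 < eps ->
  energy z - eps * z - defect z / (4 * eps) <= g (g z).
Proof.
  intros Hz Heps; unfold energy, defect.
  pose proof (g_pos z Hz) as HG; pose proof (h_pos z Hz) as HK.
  pose proof (gh_sum z Hz) as Hsum; pose proof (g_additive z Hz) as Hadd.
  set (G := g z) in *; set (K := h z) in *; set (u := g G) in *; set (v := g K) in *.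
  set (t := u * K - v * G).
  (* completing the square: t^2 + 4 eps G K t + 4 eps^2 z^2 G K >= 0 since z^2 >= G K *)
  assert (Hsq : 0 <= (t + 2 * eps * G * K) ^ 2 + 4 * eps ^ 2 * (G * K) * (z * z - G * K)).
  { assert (0 <= G * K) by nra; assert (0 <= z * z - G * K) by nra.
    pose proof (pow2_ge_0 (t + 2 * eps * G * K)).
    assert (0 <= 4 * eps ^ 2 * (G * K) * (z * z - G * K)) by
      (repeat apply Rmult_le_pos; try apply pow2_ge_0; lra).
    lra. }
  assert (Hut : u = (G ^ 2 + t) / z).
  { apply Rmult_eq_reg_r with z; [|lra]; unfold t; field_simplify; [|lra].
    rewrite <- Hsum; replace (G ^ 2) with (G * (u + v)) by (rewrite <- Hadd; ring); ring. }
  assert (Hdiff : u - (G ^ 2 / z - eps * z - t ^ 2 / (z * G * K) / (4 * eps)) =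
    ((t + 2 * eps * G * K) ^ 2 + 4 * eps ^ 2 * (G * K) * (z * z - G * K))
      / (4 * eps * z * G * K)).
  { rewrite Hut; field; repeat split; lra. }
  assert (0 <= ((t + 2 * eps * G * K) ^ 2 + 4 * eps ^ 2 * (G * K) * (z * z - G * K))
      / (4 * eps * z * G * K)).
  { apply Rle_mult_inv_pos; auto; repeat apply Rmult_lt_0_compat; lra. }
  lra.
Qed.

Lemma energy_sum_S n x : 0 < x ->
  split_sum energy (S n) x = split_sum energy n x + split_sum defect n x.
Proof.
  intros Hx; rewrite split_sum_S.
  rewrite (split_sum_ext _ (fun z => 1 * energy z + 1 * defect z)); auto.
  - rewrite split_sum_lin; ring.
  - intros z Hz; rewrite energy_split; auto; ring.
Qed.

Lemma energy_le_energy_sum n x : 0 < x -> energy x <= split_sum energy n x.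
Proof.
  intros Hx; induction n; [simpl; lra|].
  rewrite energy_sum_S; auto.
  pose proof (split_sum_nonneg defect n x Hx defect_nonneg); lra.
Qed.

Lemma energy_sum_le n x : 0 < x -> split_sum energy n x <= x.
Proof.
  intros Hx; rewrite <- (split_sum_id n x Hx) at 2.
  apply split_sum_le; auto; apply energy_le.
Qed.

(* The energy sums increase by the defect sums and stay below x, so the defect sums cannot stay large. *)
Lemma defect_sum_small x d : 0 < x -> 0 < d -> exists n, split_sum defect n x <= d.
Proof.
  intros Hx Hd; apply NNPP; intros Hlarge.
  assert (Hgrow : forall n, INR n * d <= split_sum energy n x).
  { induction n.
    - simpl; pose proof (energy_le_energy_sum 0 x Hx).
      assert (0 <= energy x) by (apply Rle_mult_inv_pos; [apply pow2_ge_0 | exact Hx]).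
      simpl in *; lra.
    - rewrite S_INR, energy_sum_S; auto.
      assert (d < split_sum defect n x) by (apply Rnot_le_lt; intros Hn; apply Hlarge; eauto).
      lra. }
  destruct (INR_archimed d x Hd) as [n Hn].
  pose proof (Hgrow n); pose proof (energy_sum_le n x Hx); lra.
Qed.

Lemma g_g_ge_energy_sum n x eps : 0 < x -> 0 < eps ->
  split_sum energy n x - eps * x - split_sum defect n x / (4 * eps) <= g (g x).
Proof.
  intros Hx Heps.
  assert (Hgg : split_sum (fun z => g (g z)) n x = g (g x)).
  { apply (split_sum_additive (fun z => g (g z))); auto; intros z Hz.
    rewrite (g_additive (g z)) at 1 by auto; rewrite <- gh_comm; auto. }
  assert (Hlin : split_sum (fun z => 1 * (1 * energy z + (- eps) * z) + (- / (4 * eps)) * defect z) n x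
                 = split_sum energy n x - eps * x - split_sum defect n x / (4 * eps)).
  { rewrite !split_sum_lin, split_sum_id; auto; field; lra. }
  rewrite <- Hlin, <- Hgg; apply split_sum_le; auto.
  intros z Hz; pose proof (g_g_lower_bound z eps Hz Heps); lra.
Qed.

Lemma ratio_g_le_ratio_g_g x : 0 < x -> ratio g x <= ratio g (g x).
Proof.
  intros Hx; pose proof (g_pos x Hx).
  assert (Hen : energy x <= g (g x)).
  { apply Rle_plus_epsilon; intros e He.
    set (eps := e / (2 * x)).
    assert (Heps : 0 < eps) by (unfold eps; apply Rdiv_lt_0_compat; lra).
    destruct (defect_sum_small x (4 * eps ^ 2 * x)) as [n Hn]; auto.
    { pose proof (pow_lt eps 2 Heps); nra. }
    pose proof (g_g_ge_energy_sum n x eps Hx Heps).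
    pose proof (energy_le_energy_sum n x Hx).
    assert (split_sum defect n x / (4 * eps) <= eps * x).
    { apply Rle_trans with (4 * eps ^ 2 * x / (4 * eps)); [|right; field; lra].
      apply Rmult_le_compat_r; auto; left; apply Rinv_0_lt_compat; lra. }
    assert (2 * eps * x = e) by (unfold eps; field; lra).
    lra. }
  assert (Hdiff : ratio g (g x) - ratio g x = (g (g x) - energy x) * / g x)
    by (unfold ratio, energy; field; lra).
  assert (0 <= (g (g x) - energy x) * / g x) by (apply Rle_mult_inv_pos; lra).
  lra.
Qed.

Definition orbit_ratio (y : R) (k : nat) : R := ratio g (Nat.iter k g y).

Lemma orbit_ratio_growing y : 0 < y -> Un_growing (orbit_ratio y).
Proof. intros Hy k; apply ratio_g_le_ratio_g_g, iter_pos; auto. Qed.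

Lemma orbit_ratio_cv y : 0 < y -> exists L, Un_cv (orbit_ratio y) L.
Proof.
  intros Hy; destruct (growing_cv (orbit_ratio y)) as [L HL].
  - apply orbit_ratio_growing; auto.
  - exists 1; intros r [k ->]; left; apply ratio_g_lt_1, iter_pos; auto.
  - exists L; exact HL.
Qed.

Lemma orbit_ratio_le_limit y L k : 0 < y -> Un_cv (orbit_ratio y) L ->
  orbit_ratio y k <= L.
Proof. intros Hy HL; apply growing_ineq; auto; apply orbit_ratio_growing; auto. Qed.

Lemma orbit_limit_pos y L : 0 < y -> Un_cv (orbit_ratio y) L -> 0 < L.
Proof.
  intros Hy HL; pose proof (orbit_ratio_le_limit y L 0 Hy HL).
  pose proof (ratio_g_pos y Hy); unfold orbit_ratio in *; simpl in *; lra.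
Qed.

(* With w = g^k y and k -> oo, the ratios g^j w / w and h^m w / w tend to L^j and (1 - L)^m. *)
Lemma orbit_limit_pow_le y L j m : 0 < y -> Un_cv (orbit_ratio y) L ->
  (forall i, (i < m)%nat -> Un_cv (orbit_ratio (Nat.iter i h y)) L) ->
  Nat.iter j g y <= Nat.iter m h y -> L ^ j <= (1 - L) ^ m.
Proof.
  intros Hy HL Hh Hjm.
  set (u k := Nat.iter k g y).
  assert (Hu : forall k, 0 < u k) by (intros k; apply iter_pos; auto).
  apply Rle_cv_lim with (Un := fun k => Nat.iter j g (u k) / u k)
                       (Vn := fun k => Nat.iter m h (u k) / u k).
  - intros k; unfold Rdiv; apply Rmult_le_compat_r; [left; apply Rinv_0_lt_compat; auto|].
    unfold u; rewrite <- Nat.iter_add, Nat.add_comm, Nat.iter_add.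
    rewrite <- iter_g_iter_h_comm by auto.
    apply iter_le; auto; apply iter_pos; auto.
  - apply iter_ratio_cv; auto; intros i _.
    apply Un_cv_ext with (fun k => orbit_ratio y (k + i)).
    + intros k; unfold orbit_ratio, u; rewrite Nat.add_comm, Nat.iter_add; reflexivity.
    + apply CV_shift'; exact HL.
  - apply iter_ratio_cv; auto; intros i Hi.
    apply Un_cv_ext with (fun k => 1 - orbit_ratio (Nat.iter i h y) k).
    + intros k; unfold orbit_ratio, u.
      rewrite iter_g_iter_h_comm, ratio_h_eq by (repeat apply iter_pos; auto); reflexivity.
    + apply CV_minus; auto; apply Un_cv_const.
Qed.

Lemma orbit_limit_lt_1 y L : 0 < y -> Un_cv (orbit_ratio y) L -> L < 1.
Proof.
  intros Hy HL.
  destruct (iter_tends_to_0 g g_pos y (h y) g_lt_id g_cont Hy (h_pos y Hy)) as [j Hj].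
  assert (Hle : L ^ j <= (1 - L) ^ 1).
  { apply (orbit_limit_pow_le y); auto.
    intros i Hi; replace i with 0%nat by lia; exact HL. }
  pose proof (pow_lt L j (orbit_limit_pos y L Hy HL)); simpl in Hle; lra.
Qed.

Lemma orbit_limit_h y L : 0 < y -> Un_cv (orbit_ratio y) L ->
  Un_cv (orbit_ratio (h y)) L.
Proof.
  intros Hy HL; destruct (orbit_ratio_cv (h y) (h_pos y Hy)) as [L' HL'].
  assert (Hcv : Un_cv (orbit_ratio y) (L * L + (1 - L) * L')).
  { apply Un_cv_ext with (fun k => orbit_ratio y k * orbit_ratio y (k + 1)
                                   + (1 - orbit_ratio y k) * orbit_ratio (h y) k).
    - intros k; unfold orbit_ratio; rewrite Nat.add_1_r; simpl.
      rewrite iter_g_h_comm by auto; symmetry; apply ratio_g_split, iter_pos; auto.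
    - apply CV_plus; apply CV_mult; auto.
      + apply CV_shift'; exact HL.
      + apply CV_minus; auto; apply Un_cv_const. }
  pose proof (UL_sequence _ _ _ HL Hcv); pose proof (orbit_limit_lt_1 y L Hy HL).
  assert (HL'L : L' = L) by nra.
  rewrite <- HL'L; exact HL'.
Qed.

Lemma orbit_limit_iter_h y L i : 0 < y -> Un_cv (orbit_ratio y) L ->
  Un_cv (orbit_ratio (Nat.iter i h y)) L.
Proof.
  intros Hy HL; induction i; simpl; auto.
  apply orbit_limit_h; auto; apply iter_pos; auto.
Qed.

Lemma orbit_limit_bound y L j m : 0 < y -> Un_cv (orbit_ratio y) L ->
  Nat.iter j g y <= Nat.iter m h y -> L ^ j <= (1 - L) ^ m.
Proof.
  intros Hy HL; apply (orbit_limit_pow_le y); auto.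
  intros i _; apply orbit_limit_iter_h; auto.
Qed.

End Splitting.

Lemma splitting_iter_cross g h y m : splitting g h -> 0 < y -> (1 <= m)%nat ->
  exists j, Nat.iter (S j) g y <= Nat.iter m h y <= Nat.iter j g y.
Proof.
  intros Hgh Hy Hm.
  pose proof (splitting_sym g h Hgh) as Hhg.
  assert (Hpos : 0 < Nat.iter m h y) by (apply iter_pos; auto; apply Hgh).
  assert (Hlt : Nat.iter m h y < y).
  { destruct m as [|m]; [lia|]; simpl.
    pose proof (g_lt_id h g Hhg _ (iter_pos h (splitting_h_pos g h Hgh) m y Hy)).
    pose proof (iter_le_self h (splitting_h_pos g h Hgh) m y (g_lt_id h g Hhg) Hy); lra. }
  destruct (iter_tends_to_0 g (splitting_g_pos g h Hgh) y (Nat.iter m h y)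
              (g_lt_id g h Hgh) (splitting_g_cont g h Hgh) Hy Hpos) as [n Hn].
  induction n as [|n IH]; [simpl in Hn; lra|].
  destruct (Rle_dec (Nat.iter n g y) (Nat.iter m h y)); auto.
  exists n; split; [exact Hn | lra].
Qed.

(* If L + L' > 1, interleaving the g- and h-orbits of y gives L * L'^m <= (1 - L)^m for every m >= 1,
   i.e. L <= ((1 - L) / L')^m, which tends to 0. *)
Lemma orbit_limits_sum_le g h y L L' : splitting g h -> 0 < y ->
  Un_cv (orbit_ratio g y) L -> Un_cv (orbit_ratio h y) L' -> L + L' <= 1.
Proof.
  intros Hgh Hy HL HL'; pose proof (splitting_sym g h Hgh) as Hhg.
  apply Rnot_lt_le; intros Hsum.
  pose proof (orbit_limit_pos g h Hgh y L Hy HL) as HL0.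
  pose proof (orbit_limit_pos h g Hhg y L' Hy HL') as HL'0.
  pose proof (orbit_limit_lt_1 h g Hhg y L' Hy HL') as HL'1.
  set (q := (1 - L) / L').
  assert (Hq : Rabs q < 1).
  { pose proof (orbit_limit_lt_1 g h Hgh y L Hy HL).
    assert (0 <= q < 1).
    { unfold q; split; [apply Rle_mult_inv_pos; lra|].
      apply Rmult_lt_reg_r with L'; auto; field_simplify; lra. }
    rewrite Rabs_right; lra. }
  destruct (pow_lt_1_zero q Hq L HL0) as [N HN].
  destruct (splitting_iter_cross g h y (S N) Hgh Hy ltac:(lia)) as [j [Hj1 Hj2]].
  pose proof (orbit_limit_bound g h Hgh y L (S j) (S N) Hy HL Hj1) as Hg.
  pose proof (orbit_limit_bound h g Hhg y L' (S N) j Hy HL' Hj2) as Hh.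
  assert (Hpow : (1 - L') ^ j <= L ^ j) by (apply pow_incr; lra).
  assert (HqN : q ^ S N < L) by (pose proof (HN (S N) ltac:(lia)); pose proof (Rle_abs (q ^ S N)); lra).
  assert (Hdecomp : (1 - L) ^ S N = q ^ S N * L' ^ S N).
  { rewrite <- Rpow_mult_distr; f_equal; unfold q; field; lra. }
  assert (HA : 0 < L' ^ S N) by (apply pow_lt; lra).
  assert (L * L' ^ S N <= L * L ^ j) by (apply Rmult_le_compat_l; lra).
  assert (q ^ S N * L' ^ S N < L * L' ^ S N) by (apply Rmult_lt_compat_r; auto).
  change (L ^ S j) with (L * L ^ j) in Hg; lra.
Qed.

Lemma ratio_g_orbit_invariant g h y : splitting g h -> 0 < y -> ratio g (g y) = ratio g y.
Proof.
  intros Hgh Hy; pose proof (splitting_sym g h Hgh) as Hhg.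
  destruct (orbit_ratio_cv g h Hgh y Hy) as [L HL].
  destruct (orbit_ratio_cv h g Hhg y Hy) as [L' HL'].
  pose proof (orbit_ratio_le_limit g h Hgh y L 1 Hy HL).
  pose proof (orbit_ratio_le_limit h g Hhg y L' 0 Hy HL').
  pose proof (orbit_limits_sum_le g h y L L' Hgh Hy HL HL').
  pose proof (ratio_g_le_ratio_g_g g h Hgh y Hy).
  pose proof (ratio_h_eq g h Hgh y Hy).
  unfold orbit_ratio in *; simpl in *; lra.
Qed.

Lemma iter_g_eq_pow g h y k : splitting g h -> 0 < y -> Nat.iter k g y = ratio g y ^ k * y.
Proof.
  intros Hgh Hy.
  assert (Hratio : forall n, ratio g (Nat.iter n g y) = ratio g y).
  { induction n; simpl; auto.
    rewrite ratio_g_orbit_invariant with (h := h); auto.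
    apply iter_pos; auto; apply Hgh. }
  induction k; simpl; [ring|].
  pose proof (iter_pos g (splitting_g_pos g h Hgh) k y Hy).
  rewrite Rmult_assoc, <- IHk, <- (Hratio k); unfold ratio; field; lra.
Qed.

Lemma ratio_g_le g h x y : splitting g h -> 0 < x -> x < y -> ratio g x <= ratio g y.
Proof.
  intros Hgh Hx Hxy; apply Rnot_lt_le; intros Hlt.
  set (p := ratio g x) in *; set (q := ratio g y) in *.
  assert (Hq : 0 < q) by (apply ratio_g_pos with h; auto; lra).
  assert (Hqp : Rabs (q / p) < 1).
  { rewrite Rabs_right.
    - apply Rmult_lt_reg_r with p; [lra|]; field_simplify; lra.
    - left; apply Rdiv_lt_0_compat; lra. }
  destruct (pow_lt_1_zero (q / p) Hqp (x / y)) as [N HN];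
    [apply Rdiv_lt_0_compat; lra|].
  pose proof (HN N (Nat.le_refl N)) as HqpN; rewrite Rabs_right in HqpN;
    [|left; apply pow_lt, Rdiv_lt_0_compat; lra].
  pose proof (iter_incr g (splitting_g_pos g h Hgh) N x y (splitting_g_incr g h Hgh) Hx Hxy)
    as Hmono.
  rewrite (iter_g_eq_pow g h x N), (iter_g_eq_pow g h y N) in Hmono by (auto; lra).
  fold p q in Hmono.
  assert (Hpow : q ^ N = (q / p) ^ N * p ^ N) by (rewrite <- Rpow_mult_distr; f_equal; field; lra).
  pose proof (pow_lt p N ltac:(lra)).
  assert ((q / p) ^ N * y < x) by (apply Rmult_lt_reg_r with (/ y);
    [apply Rinv_0_lt_compat; lra | field_simplify; lra]).
  rewrite Hpow in Hmono; nra.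
Qed.

Lemma splitting_linear g h : splitting g h ->
  exists a, 0 < a < 1 /\ forall x, 0 < x -> g x = a * x.
Proof.
  intros Hgh; pose proof (splitting_sym g h Hgh) as Hhg.
  assert (Hconst : forall x y, 0 < x -> x < y -> ratio g x = ratio g y).
  { intros x y Hx Hxy.
    pose proof (ratio_g_le g h x y Hgh Hx Hxy); pose proof (ratio_g_le h g x y Hhg Hx Hxy).
    rewrite (ratio_h_eq g h Hgh x), (ratio_h_eq g h Hgh y) in * by lra; lra. }
  exists (ratio g 1); split.
  - split; [apply ratio_g_pos with h | apply ratio_g_lt_1 with h]; auto; lra.
  - intros x Hx.
    assert (Hx1 : ratio g x = ratio g 1).
    { destruct (Rtotal_order x 1) as [H | [-> | H]].
      - apply Hconst; auto.
      - reflexivity.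
      - symmetry; apply Hconst; auto; lra. }
    rewrite <- Hx1; unfold ratio; field; lra.
Qed.

Section IdMinus.
Variable g : R -> R.
Hypothesis g_pos : forall x, 0 < x -> 0 < g x.
Hypothesis g_lt : forall x, 0 < x -> g x < x.
Hypothesis g_cont : forall x, 0 < x -> continuity_pt g x.
Hypothesis g_incr : forall x y, 0 < x -> x < y -> g x < g y.
Hypothesis g_comm : forall x, 0 < x -> g (x - g x) = g x - g (g x).

Lemma id_minus_incr x y : 0 < x -> x < y -> x - g x < y - g y.
Proof.
  intros Hx Hxy; apply Rnot_le_lt; intros Hle.
  (* then g^n y - g^n x never decreases, although g^n y tends to 0 *)
  assert (Hinv : forall n, y - x <= Nat.iter n g y - Nat.iter n g x /\
            Nat.iter n g y - g (Nat.iter n g y) <= Nat.iter n g x - g (Nat.iter n g x)).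
  { induction n as [|n [Hgap Hh]]; simpl; [lra|].
    set (X := Nat.iter n g x) in *; set (Y := Nat.iter n g y) in *.
    assert (HX : 0 < X) by (apply iter_pos; auto).
    assert (HhX : 0 < X - g X) by (pose proof (g_lt X HX); lra).
    assert (g (Y - g Y) <= g (X - g X)).
    { destruct (Rle_lt_or_eq_dec _ _ Hh) as [Hlt | ->]; [|lra].
      left; apply g_incr; auto; pose proof (g_lt Y ltac:(lra)); lra. }
    rewrite <- g_comm, <- g_comm by (auto; lra); lra. }
  destruct (iter_tends_to_0 g g_pos y (y - x) g_lt g_cont) as [n Hn]; try lra.
  pose proof (iter_pos g g_pos n x Hx); pose proof (proj1 (Hinv n)); lra.
Qed.

Lemma splitting_id_minus : splitting g (fun x => x - g x).
Proof.
  constructor; auto.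
  - intros x Hx; pose proof (g_lt x Hx); lra.
  - intros x Hx; ring.
  - exact id_minus_incr.
  - intros x Hx; apply continuity_pt_minus; auto.
    apply derivable_continuous_pt, derivable_pt_id.
Qed.

End IdMinus.

Lemma homeo_X_R_ln : homeo_X_R ln.
Proof.
  split.
  - intros x Hx; apply derivable_continuous_pt; exists (/ x); apply derivable_pt_lim_ln; auto.
  - exists exp; repeat split.
    + apply exp_pos.
    + apply ln_exp.
    + apply exp_ln.
    + intros y; apply derivable_continuous_pt, derivable_pt_exp.
Qed.

Lemma Abel_function_ln (phi : R -> R) (a : R) :
  0 < a -> (forall x, 0 < x -> phi x = a * x) -> Abel_function phi ln.
Proof.
  intros Ha Hphi; split; [exact homeo_X_R_ln|].
  exists (ln a); intros x Hx; rewrite Hphi, ln_mult; auto; ring.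
Qed.

Lemma homeo_X_R_inj (alpha : R -> R) x y :
  homeo_X_R alpha -> 0 < x -> 0 < y -> alpha x = alpha y -> x = y.
Proof.
  intros [_ [beta [_ [_ [Hba _]]]]] Hx Hy Hxy.
  rewrite <- (Hba x Hx), <- (Hba y Hy), Hxy; reflexivity.
Qed.

Lemma common_Abel_function_comm (phi psi alpha : R -> R) :
  (forall x, 0 < x -> 0 < phi x) -> (forall x, 0 < x -> 0 < psi x) ->
  common_Abel_function phi psi alpha -> forall x, 0 < x -> phi (psi x) = psi (phi x).
Proof.
  intros phi_pos psi_pos [[Halpha [c Hc]] [_ [d Hd]]] x Hx.
  apply (homeo_X_R_inj alpha); auto.
  rewrite Hc, Hd, Hd, Hc by auto; ring.
Qed.

Theorem mainTheorem7 (g : R -> R)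
  (g_pos : forall x, 0 < x -> 0 < g x)
  (g_cont : forall x, 0 < x -> continuity_pt g x)
  (g_incr : forall x y, 0 < x -> x < y -> g x < g y)
  (g_lt : forall x, 0 < x -> g x < x) :
  ((exists alpha : R -> R, common_Abel_function g (fun x => x - g x) alpha) <->
   (forall x, 0 < x -> g (x - g x) = g x - g (g x))) /\
  ((forall x, 0 < x -> g (x - g x) = g x - g (g x)) <->
   (forall x, 0 < x -> g x = g (x - g x) + g (g x))).
Proof.
  assert (h_pos : forall x, 0 < x -> 0 < x - g x) by (intros x Hx; pose proof (g_lt x Hx); lra).
  split; split.
  - intros [alpha Halpha] x Hx.
    exact (common_Abel_function_comm g (fun x => x - g x) alpha g_pos h_pos Halpha x Hx).
  - intros g_comm.
    destruct (splitting_linear g (fun x => x - g x)) as [a [Ha Hga]];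
      [apply splitting_id_minus; auto|].
    exists ln; split.
    + apply Abel_function_ln with a; [lra | exact Hga].
    + apply Abel_function_ln with (1 - a); [lra|].
      intros x Hx; rewrite Hga; auto; ring.
  - intros g_comm x Hx; rewrite g_comm; auto; ring.
  - intros g_add x Hx; rewrite (g_add x Hx) at 2; ring.
Qed.
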